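(* Let $I'(i,j)$, for $1\le i\le j\le n$, be the smallest index $k\in[i,j]$ such that $d_P(v_i,v_k)\ge |v_iv_j|+d_P(v_k,v_j)$. Then (1) $I'(i,j)\le I'(i,j+1)$ for all $1\le i\le j\le n-1$; and (2) $I'(i,j)\le I'(i+1,j)$ for all $1\le i\le j-1$, $j\le n$.
   Context: Let $v_1,\dots,v_n$ be points of a metric space with metric $|\cdot|$ (symmetric, nonnegative, $|v_iv_j|=0$ iff $i=j$, triangle inequality). For $i\le j$ let $d_P(v_i,v_j)=\sum_{k=i}^{j-1}|v_kv_{k+1}|$ and $d_P(v_j,v_i)=d_P(v_i,v_j)$. Note $I'(i,j)$ is well defined since $d_P(v_i,v_j)\ge|v_iv_j|$. *)

From Stdlib Require Import Reals Lra Lia Arith.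
Open Scope R_scope.

Definition is_metric {T : Type} (d : T -> T -> R) : Prop :=
  (forall x y, d x y = d y x) /\
  (forall x y, 0 <= d x y) /\
  (forall x y, d x y = 0 <-> x = y) /\
  (forall x y z, d x z <= d x y + d y z).

(* Path length d_P(v_i, v_j) = sum_{k=i}^{j-1} |v_k v_{k+1}| for i <= j,
   symmetrized for i > j. *)
Fixpoint path_len_from {T : Type} (d : T -> T -> R) (v : nat -> T)
    (i : nat) (m : nat) : R :=
  match m with
  | O => 0
  | S m' => d (v i) (v (S i)) + path_len_from d v (S i) m'
  end.

Definition dP {T : Type} (d : T -> T -> R) (v : nat -> T) (i j : nat) : R :=
  if Nat.leb i j then path_len_from d v i (j - i)
  else path_len_from d v j (i - j).

Definition Icond {T : Type} (d : T -> T -> R) (v : nat -> T) (i j k : nat)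
  : Prop :=
  dP d v i k >= d (v i) (v j) + dP d v k j.

Definition is_I' {T : Type} (d : T -> T -> R) (v : nat -> T) (i j k : nat)
  : Prop :=
  (i <= k <= j)%nat /\ Icond d v i j k /\
  (forall k', (i <= k' < k)%nat -> ~ Icond d v i j k').

From Stdlib Require Import Reals Lra Lia Arith.
Open Scope R_scope.

(* I'(i,j) is the least index of [i,j] satisfying the condition
   C(i,j,k) : d_P(v_i,v_k) >= |v_i v_j| + d_P(v_k,v_j).  Hence I'(i,j) <= k
   for every k >= i satisfying C(i,j,k), and both monotonicity claims reduce
   to transferring the condition:
   (1) C(i,j+1,k) implies C(i,j,k) for k <= j, because appending the edge
       v_j v_{j+1} adds |v_j v_{j+1}| to d_P(v_k,.) while, by the triangle
       inequality, it adds at most that much to |v_i .|;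
   (2) C(i+1,j,k) implies C(i,j,k) for k >= i+1, because prepending the edge
       v_i v_{i+1} adds |v_i v_{i+1}| to d_P(.,v_k) while, by the triangle
       inequality, it adds at most that much to |. v_j|. *)

Lemma path_len_from_snoc {T : Type} (d : T -> T -> R) (v : nat -> T) :
  forall m i, path_len_from d v i (S m)
              = path_len_from d v i m + d (v (i + m)%nat) (v (S (i + m))).
Proof.
  induction m as [|m IH]; intros i.
  - simpl. rewrite Nat.add_0_r. lra.
  - change (path_len_from d v i (S (S m)))
      with (d (v i) (v (S i)) + path_len_from d v (S i) (S m)).
    rewrite IH. simpl path_len_from.
    replace (S i + m)%nat with (i + S m)%nat by lia. lra.
Qed.

Lemma dP_of_le {T : Type} (d : T -> T -> R) (v : nat -> T) (a b : nat) :
  (a <= b)%nat -> dP d v a b = path_len_from d v a (b - a).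
Proof. intros Hab. unfold dP. now rewrite (proj2 (Nat.leb_le a b) Hab). Qed.

Lemma dP_extend_right {T : Type} (d : T -> T -> R) (v : nat -> T) (k j : nat) :
  (k <= j)%nat -> dP d v k (S j) = dP d v k j + d (v j) (v (S j)).
Proof.
  intros Hkj. rewrite !dP_of_le by lia.
  replace (S j - k)%nat with (S (j - k)) by lia.
  rewrite path_len_from_snoc.
  now replace (k + (j - k))%nat with j by lia.
Qed.

Lemma dP_extend_left {T : Type} (d : T -> T -> R) (v : nat -> T) (i k : nat) :
  (S i <= k)%nat -> dP d v i k = d (v i) (v (S i)) + dP d v (S i) k.
Proof.
  intros Hik. rewrite !dP_of_le by lia.
  now replace (k - i)%nat with (S (k - S i)) by lia.
Qed.

Lemma is_I'_le_witness {T : Type} (d : T -> T -> R) (v : nat -> T)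
    (i j k k' : nat) :
  is_I' d v i j k -> (i <= k')%nat -> Icond d v i j k' -> (k <= k')%nat.
Proof.
  intros [_ [_ Hmin]] Hik' Hk'.
  destruct (le_lt_dec k k') as [Hle|Hlt]; [exact Hle|].
  exfalso. exact (Hmin k' (conj Hik' Hlt) Hk').
Qed.

(* Transfer (1): shortening the target from v_{j+1} to v_j keeps the
   condition, using symmetry and the triangle inequality at v_j. *)
Lemma Icond_shrink_right {T : Type} (d : T -> T -> R) (v : nat -> T)
    (i j k : nat) :
  (forall x y, d x y = d y x) ->
  (forall x y z, d x z <= d x y + d y z) ->
  (k <= j)%nat -> Icond d v i (S j) k -> Icond d v i j k.
Proof.
  unfold Icond. intros Hsym Htri Hkj Hcond.
  rewrite dP_extend_right in Hcond by exact Hkj.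
  pose proof (Htri (v i) (v (S j)) (v j)) as Hij.
  rewrite (Hsym (v (S j)) (v j)) in Hij.
  lra.
Qed.

(* Transfer (2): moving the source from v_{i+1} back to v_i keeps the
   condition, using the triangle inequality at v_{i+1}. *)
Lemma Icond_grow_left {T : Type} (d : T -> T -> R) (v : nat -> T)
    (i j k : nat) :
  (forall x y z, d x z <= d x y + d y z) ->
  (S i <= k)%nat -> Icond d v (S i) j k -> Icond d v i j k.
Proof.
  unfold Icond. intros Htri Hik Hcond.
  rewrite dP_extend_left by exact Hik.
  pose proof (Htri (v i) (v (S i)) (v j)).
  lra.
Qed.

Theorem lemma3 (T : Type) (d : T -> T -> R) (v : nat -> T) (n : nat)
  (Hd : is_metric d) :
  (forall i j k1 k2, (1 <= i)%nat -> (i <= j)%nat -> (j <= n - 1)%nat ->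
     is_I' d v i j k1 -> is_I' d v i (S j) k2 -> (k1 <= k2)%nat) /\
  (forall i j k1 k2, (1 <= i)%nat -> (i <= j - 1)%nat -> (j <= n)%nat ->
     is_I' d v i j k1 -> is_I' d v (S i) j k2 -> (k1 <= k2)%nat).
Proof.
  destruct Hd as [Hsym [_ [_ Htri]]].
  split.
  - intros i j k1 k2 _ _ _ HI1 HI2.
    destruct HI2 as [[Hik2 _] [Hcond2 _]].
    destruct (le_lt_dec k2 j) as [Hk2j|Hk2j].
    + apply (is_I'_le_witness d v i j k1 k2 HI1 Hik2).
      exact (Icond_shrink_right d v i j k2 Hsym Htri Hk2j Hcond2).
    + (* k2 = j+1, while I'(i,j) <= j *)
      destruct HI1 as [[_ Hk1j] _]. lia.
  - intros i j k1 k2 _ _ _ HI1 HI2.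
    destruct HI2 as [[Hik2 _] [Hcond2 _]].
    apply (is_I'_le_witness d v i j k1 k2 HI1); [lia|].
    exact (Icond_grow_left d v i j k2 Htri Hik2 Hcond2).
Qed.
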